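(* Let $D$ be a reduced knot diagram, let $2\le k<\infty$, and fix a version of the $k$-color region select game on $D$ and a checkerboard shading of $D$. Let $r_1$ be a shaded region and $r_2$ an unshaded region. (i) If $k=2^t$ for some integer $t\ge1$, then every color configuration has a unique solving pattern in which $r_1$ and $r_2$ are not pushed. (ii) If $k$ is not a power of $2$, let $p$ be the smallest odd prime factor of $k$. If $d(r_1,r_2)<p$, then every color configuration has a unique solving pattern in which $r_1$ and $r_2$ are not pushed.
   Context: Diagrams: a link (knot) diagram $D$ is the underlying graph of a regular projection of a link (knot) into $S^2$. Its vertices are the crossings, each of valence 4, and over/under information is ignored. Components without crossings are closed loops, each regarded as one edge with no vertices. Regions of $D$ are the connected components of $S^2\setminus D$. A vertex or edge is incident to a region if it lies in the boundary of that region. Two regions are adjacent if they are incident to a common edge. A vertex $v$ is reducible if some circle in $S^2$ meets $D$ transversely only at $v$, and irreducible otherwise. An irreducible vertex is incident to four distinct regions. A reducible vertex $v$ is incident to exactly three regions $r_0,r_1,r_2$, where $r_0$ touches $v$ from two sides and $r_1,r_2$ touch it from one side. A knot diagram with $n$ vertices has $n+2$ regions. A knot diagram is reduced if all its vertices are irreducible. Ring: for an integer $k\ge2$ let $\mathbb{Z}_k=\mathbb{Z}/k\mathbb{Z}$, and for $k=\infty$ let $\mathbb{Z}_\infty=\mathbb{Z}$. Game versions: a version of the $k$-color region select game on $D$ is a choice of an increment number $a(v,r)\in\mathbb{Z}_k$ for every incident vertex–region pair, subject to the following rules. - If $k<\infty$ and $v$ is irreducible, then $a(v,r)=a_v$ is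 the same for all regions $r$ incident to $v$, and $a_v$ is not a zero divisor of $\mathbb{Z}_k$. - If $k<\infty$ and $v$ is reducible, then $a(v,r_0)$ is arbitrary, while $a(v,r_1)$ and $a(v,r_2)$ are not zero divisors. - If $k=\infty$, then $a(v,r)=1$, except that $a(v,r_0)\in\mathbb{Z}$ is arbitrary when $v$ is reducible. - The original game is the version in which all increment numbers equal $1$. Game matrix: enumerate the vertices as $v_1,\dots,v_n$ and the regions as $r_1,\dots,r_m$. The game matrix is the $n\times m$ matrix $M$ over $\mathbb{Z}_k$ with $M_{ij}=a(v_i,r_j)$ if $v_i$ is incident to $r_j$, and $M_{ij}=0$ otherwise. Patterns and configurations: a push pattern is a vector $\mathbf p\in\mathbb{Z}_k^m$, and $\mathbf p(r_j)=p_j$ is the number of times $r_j$ is pushed. A region $r$ is not pushed in $\mathbf p$ if $\mathbf p(r)=0$. A color configuration is a vector $\mathbf c\in\mathbb{Z}_k^n$. Applying $\mathbf p$ to $\mathbf c$ yields $\mathbf c+M\mathbf p$. The configuration $\mathbf c$ is solvable if some $\mathbf p$ satisfies $M\mathbf p=-\mathbf c$; such a $\mathbf p$ is a solving pattern for $\mathbf c$. $D$ is always solvable in the version if every $\mathbf c\in\mathbb{Z}_k^n$ is solvable. A null pattern is an element of $Ker_k(M)=\{\mathbf p\in\mathbb{Z}_k^m: M\mathbf p=0\}$. Checkerboard shading: a checkerboard shading of $D$ is a shading of some of its regions such that, of any two adjacent regions, exactly one is shaded. Distance: the dual graph of $D$ has one vertex per region, with an edge between the vertices of each pair of adjacent regions.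 The distance $d(r_1,r_2)$ is the graph distance between the corresponding vertices of the dual graph. *)

From HB Require Import structures.
From mathcomp Require Import all_boot all_order all_algebra.
Set Implicit Arguments.
Unset Strict Implicit.
Unset Printing Implicit Defensive.
Import GRing.Theory.

(* Combinatorial encoding of a (link/knot) diagram on S^2 as a 4-regular
   combinatorial map.  The vertices (crossings) form a finite type V; the
   darts (half-edges) are the pairs (v, i) with i : 'I_4, numbered in
   counterclockwise cyclic order around v, so rotation is i |-> i+1 mod 4.
   alpha : darts -> darts is the fixed-point-free involution matching the two
   half-edges of each edge.  The dart (v,i) also names the corner of v between
   the half-edges (v,i) and (v,i+1).  Corners are grouped into regions
   (faces) by the face permutation phi = alpha o rot; the regions form a finite
   type F and face : darts -> F sends a corner to the region containing it. *)

Definition rot (V : finType) (d : V * 'I_4) : V * 'I_4 := (d.1, ordS d.2).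
Definition rotinv (V : finType) (d : V * 'I_4) : V * 'I_4 := (d.1, ord_pred d.2).

Definition face_perm (V : finType) (alpha : V * 'I_4 -> V * 'I_4) (d : V * 'I_4) :=
  alpha (rot d).

(* straight-ahead walk through crossings: leave along d, arrive at alpha d,
   continue along the opposite half-edge *)
Definition straight (V : finType) (alpha : V * 'I_4 -> V * 'I_4) (d : V * 'I_4) :=
  let e := alpha d in (e.1, ordS (ordS e.2)).

(* (alpha, face) is a knot diagram on S^2 (with at least one crossing):
   - alpha is a fixed-point-free involution (edges);
   - face identifies exactly the orbits of the face permutation, and every
     region contains a corner;
   - the straight-ahead walk has a single component (a knot, not a link);
     this also forces the map to be connected;
   - Euler's formula for the sphere: #V - #E + #F = 2 with #E = 2 #V. *)
Definition is_knot_diagram (V F : finType) (alpha : V * 'I_4 -> V * 'I_4)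
    (face : V * 'I_4 -> F) : Prop :=
  (forall d, alpha (alpha d) = d) /\
  (forall d, alpha d != d) /\
  (forall d d', (face d == face d') = fconnect (face_perm alpha) d d') /\
  (forall r : F, exists d, face d = r) /\
  (forall d d', fconnect (straight alpha) d d' || fconnect (straight alpha) d (alpha d')) /\
  #|F| = (#|V| + 2)%N.

Definition incident (V F : finType) (face : V * 'I_4 -> F) (v : V) (r : F) : bool :=
  [exists i : 'I_4, face (v, i) == r].

Definition irreducible_vertex (V F : finType) (face : V * 'I_4 -> F) (v : V) : bool :=
  [forall i : 'I_4, forall j : 'I_4, (face (v, i) == face (v, j)) ==> (i == j)].

Definition reduced_diagram (V F : finType) (face : V * 'I_4 -> F) : Prop :=
  forall v, irreducible_vertex face v.

(* adjacency of regions: incident to a common edge.  The two sides of the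
   edge containing the half-edge d are the regions of the corners d and
   rotinv d. *)
Definition adjacent (V F : finType) (face : V * 'I_4 -> F) (r r' : F) : bool :=
  [exists d : V * 'I_4, (face d == r) && (face (rotinv d) == r')].

Definition checkerboard (V F : finType) (face : V * 'I_4 -> F) (shade : F -> bool) : Prop :=
  forall r r', r != r' -> adjacent face r r' -> shade r != shade r'.

(* distance in the dual graph: least length of a walk from r1 to r2
   (walks longer than #|F| are never needed; returns #|F| if unreachable) *)
Definition dual_dist (V F : finType) (face : V * 'I_4 -> F) (r1 r2 : F) : nat :=
  find (fun m => [exists s : m.-tuple F, path (adjacent face) r1 s && (last r1 s == r2)])
       (iota 0 #|F|).

Definition not_zero_divisor (k : nat) (a : 'Z_k) : Prop :=
  forall x : 'Z_k, (a * x = 0)%R -> x = 0%R.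

Definition is_version (k : nat) (V F : finType) (face : V * 'I_4 -> F)
    (a : V -> F -> 'Z_k) : Prop :=
  forall v : V,
    (irreducible_vertex face v ->
       (forall r r', incident face v r -> incident face v r' -> a v r = a v r') /\
       (forall r, incident face v r -> not_zero_divisor (a v r))) /\
    (~~ irreducible_vertex face v ->
       forall i : 'I_4, (forall j : 'I_4, face (v, j) = face (v, i) -> j = i) ->
         not_zero_divisor (a v (face (v, i)))).

Definition game_matrix (k : nat) (V F : finType) (face : V * 'I_4 -> F)
    (a : V -> F -> 'Z_k) (v : V) (r : F) : 'Z_k :=
  if incident face v r then a v r else 0%R.

Definition solving (k : nat) (V F : finType) (face : V * 'I_4 -> F)
    (a : V -> F -> 'Z_k) (c : {ffun V -> 'Z_k}) (p : {ffun F -> 'Z_k}) : Prop :=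
  forall v : V, (\sum_(r : F) game_matrix face a v r * p r)%R = (- c v)%R.

Definition unique_solving (k : nat) (V F : finType) (face : V * 'I_4 -> F)
    (a : V -> F -> 'Z_k) (r1 r2 : F) : Prop :=
  forall c : {ffun V -> 'Z_k},
    exists! p : {ffun F -> 'Z_k}, (p r1 = 0%R /\ p r2 = 0%R) /\ solving face a c p.

(* Let [p] be a null pattern vanishing at [r1] and [r2].  Since each increment
   number is a non-zero-divisor, the four regions around every crossing carry
   values of [p] summing to zero.  Hence the sum [x_e] of [p] over the two sides
   of an edge [e] changes sign when the knot passes straight through a crossing,
   and as the knot has one component, [x_e = +-x] for a single [x].  Walking
   from [r1] to [r2] in the dual graph, each step replaces [u] by [+-x - u], so
   [0 = p r2 = (a - b) x] with [a + b] the length of the walk.  That length is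
   odd by the checkerboard shading, so [a - b] is odd and at most the length,
   hence a unit of [Z_k] under either hypothesis; thus [x = 0], and then [p]
   propagates as [0] from [r1] to every region.  The null space being trivial
   on the [#|F| - 2 = #|V|] free regions, the square system is solvable. *)

From Pilot Require Import Defs.
From mathcomp Require Import all_boot all_order all_algebra.
From mathcomp Require Import ring zify.

Set Implicit Arguments.
Unset Strict Implicit.
Unset Printing Implicit Defensive.
Import GRing.Theory.

Lemma ord_pred_neq (i : 'I_4) : ord_pred i != i.
Proof. by case: i => [[|[|[|[|?]]]] ?]. Qed.

Lemma ord_pred_cycle (i j : 'I_4) : exists n, iter n (@ord_pred 4) i = j.
Proof.
exists ((i + 4 - j) %% 4); apply: val_inj.
by case: i j => [[|[|[|[|?]]]] ?] [[|[|[|[|?]]]] ?].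
Qed.

Lemma sum_I4 (R : comPzRingType) (g : 'I_4 -> R) (i : 'I_4) :
  (\sum_j g j = g i + g (ordS i) + g (ordS (ordS i)) + g (ord_pred i))%R.
Proof.
(* Reading every [g j] as [G (val j)] lets the ordinal arithmetic compute. *)
pose G n := g (inord n).
have gE j : g j = G j by rewrite /G inord_val.
rewrite !big_ord_recl big_ord0 !gE /= /bump /=.
by case: i => [[|[|[|[|?]]]] ?] //=; rewrite ?modnn ?modnDr ?modn_small //; ring.
Qed.

Lemma coprime_lt_least_odd_prime (k p m : nat) :
  (forall q, prime q -> odd q -> q %| k -> p <= q) -> odd m -> m < p ->
  coprime k m.
Proof.
move=> p_min odd_m lt_mp.
rewrite /coprime eqn_leq gcdn_gt0 (odd_gt0 odd_m) orbT andbT.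
rewrite leqNgt; apply/negP => /pdiv_prime q_pr.
have /andP[q_k q_m] : (pdiv (gcdn k m) %| k) && (pdiv (gcdn k m) %| m).
  by rewrite -dvdn_gcd pdiv_dvd.
have odd_q : odd (pdiv (gcdn k m)).
  by apply: contraLR odd_m; rewrite -!dvdn2 => /dvdn_trans; apply.
have := p_min _ q_pr odd_q q_k.
by rewrite leqNgt (leq_ltn_trans (dvdn_leq (odd_gt0 odd_m) q_m) lt_mp).
Qed.

Lemma dual_distP (V F : finType) (face : V * 'I_4 -> F) (r1 r2 : F) :
  connect (adjacent face) r1 r2 ->
  exists s, [/\ path (adjacent face) r1 s, last r1 s = r2 & size s = dual_dist face r1 r2].
Proof.
case/connectP => s0 s0_path ->; case: (shortenP s0_path) => s s_path s_uniq _.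
pose P m := [exists t : m.-tuple F, path (adjacent face) r1 t && (last r1 t == last r1 s)].
have size_s : size s < #|F|.
  by have := max_card (mem (r1 :: s)); rewrite (card_uniqP s_uniq).
have has_P : has P (iota 0 #|F|).
  by apply/hasP; exists (size s); rewrite ?mem_iota //; apply/existsP; exists (in_tuple s);
     rewrite s_path eqxx.
have := nth_find 0 has_P; rewrite nth_iota ?add0n; last first.
  by rewrite -{2}(size_iota 0 #|F|) -has_find.
by case/existsP => t /andP[t_path /eqP t_last]; exists t; rewrite size_tuple.
Qed.

Local Open Scope ring_scope.

Lemma Zp_natmul_eq0 (k m : nat) (x : 'Z_k) :
  (1 < k)%N -> coprime k m -> x *+ m = 0 -> x = 0.
Proof.
move=> k_gt1 km; rewrite -mulr_natr => /(congr1 (fun y => y / m%:R)).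
by rewrite mul0r mulrK // unitZpE.
Qed.

Lemma Zp_natmul_eq_odd (k a b : nat) (x : 'Z_k) :
  (1 < k)%N -> odd (a + b) ->
  (forall m, odd m -> (m <= a + b)%N -> coprime k m) ->
  x *+ a = x *+ b -> x = 0.
Proof.
move=> k_gt1; wlog le_ab : a b / (a <= b)%N => [hwlog | odd_ab cop x_ab].
  by case: (leqP a b) => [|/ltnW] /hwlog; rewrite // addnC => H ? ? /esym; apply: H.
apply: (@Zp_natmul_eq0 _ (b - a)) => //; last by rewrite mulrnBr // x_ab subrr.
by apply: cop; [rewrite oddB // addbC -oddD | lia].
Qed.

Lemma square_system_uniq_solution (R : finPzRingType) (V F : finType)
    (M : V -> F -> R) (Z : pred F) :
  #|[predC Z]| = #|V| ->
  (forall p : {ffun F -> R}, {in Z, forall r, p r = 0} ->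
     (forall v, \sum_r M v r * p r = 0) -> p = 0) ->
  forall c : V -> R, exists! p : {ffun F -> R},
    {in Z, forall r, p r = 0} /\ forall v, \sum_r M v r * p r = c v.
Proof.
move=> cardZ ker0 c.
pose L (p : {ffun F -> R}) : {ffun V -> R} := [ffun v => \sum_r M v r * p r].
pose P := pffun_on (0 : R) [predC Z] predT.
have PP (p : {ffun F -> R}) : reflect {in Z, forall r, p r = 0} (p \in P).
  apply: (iffP pffun_onP) => [[/supportP p0 _] r Zr | p0].
    by apply: p0; rewrite inE Zr.
  by split=> [|_ //]; apply/supportP => r; rewrite inE negbK; apply: p0.
have L_inj : {in P &, injective L}.
  move=> p q /PP p0 /PP q0 /ffunP Lpq; apply/eqP; rewrite -subr_eq0; apply/eqP.
  apply: ker0 => [r Zr | v]; first by rewrite !ffunE p0 ?q0 ?subrr.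
  have := Lpq v; rewrite !ffunE => Lv.
  by under eq_bigr do rewrite !ffunE mulrBr; rewrite sumrB Lv subrr.
have L_onto : L @: P = [set: {ffun V -> R}].
  apply/eqP; rewrite eqEcard subsetT cardsT card_ffun (card_in_imset L_inj).
  by rewrite card_pffun_on cardZ cardT -cardE leqnn.
have /imsetP[p /PP p0 Lp] : finfun c \in L @: P by rewrite L_onto inE.
exists p; split=> [|q [q0 Mq]].
  by split=> // v; move/ffunP: Lp => /(_ v); rewrite !ffunE.
apply: L_inj; [exact/PP | exact/PP |].
by rewrite -Lp; apply/ffunP => v; rewrite !ffunE Mq.
Qed.

Section Diagram.

Variables (V F : finType) (alpha : V * 'I_4 -> V * 'I_4) (face : V * 'I_4 -> F).
Hypothesis alphaK : involutive alpha.
Hypothesis faceE : forall d d', (face d == face d') = fconnect (face_perm alpha) d d'.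
Hypothesis one_component :
  forall d d', fconnect (straight alpha) d d' || fconnect (straight alpha) d (alpha d').
Hypothesis face_surj : forall r : F, exists d, face d = r.
Hypothesis reduced : reduced_diagram face.

Lemma rot_rotinv (d : V * 'I_4) : Defs.rot (rotinv d) = d.
Proof. by case: d => v i; rewrite /Defs.rot /rotinv /= ord_predK. Qed.

Lemma face_face_perm d : face (face_perm alpha d) = face d.
Proof. by apply/esym/eqP; rewrite faceE fconnect1. Qed.

Lemma face_alpha e : face (alpha e) = face (rotinv e).
Proof. by rewrite -(face_face_perm (rotinv e)) /face_perm rot_rotinv. Qed.

Lemma face_rotinv_alpha e : face (rotinv (alpha e)) = face e.
Proof. by rewrite -(face_face_perm (rotinv (alpha e))) /face_perm rot_rotinv alphaK. Qed.

Lemma face_rotinv_neq d : face d != face (rotinv d).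
Proof.
case: d => v i; apply: contra (ord_pred_neq i) => /eqP fE.
by move/forallP/(_ i)/forallP/(_ (ord_pred i)): (reduced v); rewrite fE eqxx eq_sym.
Qed.

Lemma dart_ind (P : V * 'I_4 -> Prop) :
  (forall d, P d -> P (rotinv d)) -> (forall e, P e -> P (rotinv (alpha e))) ->
  forall d0, P d0 -> forall d, P d.
Proof.
move=> P_rotinv P_rotinv_alpha.
have P_vertex d e : d.1 = e.1 -> P d -> P e.
  case: d e => v i [_ j] /= <-; have [n <-] := ord_pred_cycle i j.
  by elim: n => //= n IHn Pi; apply: (P_rotinv (v, _) (IHn Pi)).
have P_alpha e : P e -> P (alpha e) by move/P_rotinv_alpha; apply: P_vertex.
have P_straight d : P d -> P (straight alpha d) by move/P_alpha; apply: P_vertex.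
move=> d0 P0 d; have P_iter n : P (iter n (straight alpha) d0).
  by elim: n => //= n /P_straight.
case/orP: (one_component d0 d) => /iter_findex d_iter; first by rewrite -d_iter.
by rewrite -(alphaK d) -d_iter; apply: P_alpha.
Qed.

Lemma connect_adjacent r r' : connect (adjacent face) r r'.
Proof.
have [d0 <-] := face_surj r; have [d <-] := face_surj r'.
apply: (@dart_ind (fun d => connect (adjacent face) (face d0) (face d))) => //.
- move=> e /connect_trans; apply; apply: connect1; apply/existsP; exists e.
  by rewrite !eqxx.
- by move=> e; rewrite face_rotinv_alpha.
Qed.

Lemma walk_shade (shade : F -> bool) r s :
  checkerboard face shade -> path (adjacent face) r s ->
  shade (last r s) = odd (size s) (+) shade r.
Proof.
move=> checker; elim/last_ind: s => [|s x IHs] /=; first by case: (shade r).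
rewrite rcons_path last_rcons size_rcons => /andP[/IHs shade_s adj].
have neq : last r s != x.
  by case/existsP: adj => d /andP[/eqP <- /eqP <-]; apply: face_rotinv_neq.
move: (checker _ _ neq adj); rewrite shade_s /=.
by case: (shade x); case: odd; case: (shade r).
Qed.

Lemma corner_sum (R : nmodType) (g : F -> R) (v : V) :
  \sum_(r | incident face v r) g r = \sum_i g (face (v, i)).
Proof.
have face_inj : {in [set: 'I_4] &, injective (fun i => face (v, i))}.
  move=> i j _ _ /= fE.
  by move/forallP/(_ i)/forallP/(_ j): (reduced v); rewrite fE eqxx => /eqP.
transitivity (\sum_(r in [set face (v, i) | i in [set: 'I_4]]) g r).
  by apply: eq_bigl => r; apply/existsP/imsetP => [[i /eqP <-] | [i _ ->]]; exists i.
by rewrite (big_imset _ face_inj); apply: eq_bigl => i; rewrite in_setT.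
Qed.

Section EdgeSum.

Variables (R : comPzRingType) (p : F -> R).
Hypothesis corner_sum0 : forall v, \sum_i p (face (v, i)) = 0.

Definition edge_sum d := p (face d) + p (face (rotinv d)).

Lemma edge_sum_opposite v i : edge_sum (v, ordS (ordS i)) = - edge_sum (v, i).
Proof.
apply/eqP; rewrite -subr_eq0 opprK -(corner_sum0 v) (sum_I4 _ i).
by rewrite /edge_sum /rotinv /= ordSK; apply/eqP; ring.
Qed.

Lemma edge_sum_alpha e : edge_sum (alpha e) = edge_sum e.
Proof. by rewrite /edge_sum face_alpha face_rotinv_alpha addrC. Qed.

Lemma edge_sum_straight d : edge_sum (straight alpha d) = - edge_sum d.
Proof. by rewrite /straight /= edge_sum_opposite -surjective_pairing edge_sum_alpha. Qed.

Lemma edge_sum_sign d0 d : edge_sum d = edge_sum d0 \/ edge_sum d = - edge_sum d0.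
Proof.
have sign_iter n : edge_sum (iter n (straight alpha) d0) = edge_sum d0 \/
                   edge_sum (iter n (straight alpha) d0) = - edge_sum d0.
  elim: n => [|n IHn] /=; first by left.
  by rewrite edge_sum_straight; case: IHn => ->; [right | left; rewrite opprK].
case/orP: (one_component d0 d) => /iter_findex d_iter; first by rewrite -d_iter.
by rewrite -edge_sum_alpha -d_iter.
Qed.

Lemma walk_last_value d0 s : p (face d0) = 0 -> path (adjacent face) (face d0) s ->
  exists a b, (a + b = size s)%N /\
    p (last (face d0) s) = edge_sum d0 *+ a - edge_sum d0 *+ b.
Proof.
move=> p0; elim/last_ind: s => [|s r IHs]; first by exists 0%N, 0%N; rewrite /= p0 subrr.
rewrite rcons_path last_rcons size_rcons => /andP[/IHs [a [b [ab_s p_last]]]].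
case/existsP => d /andP[/eqP d_last /eqP d_r].
have p_r : p r = edge_sum d - p (last (face d0) s) by rewrite /edge_sum d_last d_r; ring.
case: (edge_sum_sign d0 d) => sign_d; [exists b.+1, a | exists b, a.+1]; split;
  rewrite ?p_r ?sign_d ?p_last ?mulrS; try ring; lia.
Qed.

Lemma pattern_eq0_of_edge_sum0 d0 :
  (forall d, edge_sum d = 0) -> p (face d0) = 0 -> forall r, p r = 0.
Proof.
move=> edge0 p0 r; have [d <-] := face_surj r.
apply: (@dart_ind (fun d => p (face d) = 0)) p0 d => [d pd | e].
  by have := edge0 d; rewrite /edge_sum pd add0r.
by rewrite face_rotinv_alpha.
Qed.

End EdgeSum.

Variables (k : nat) (a : V -> F -> 'Z_k).
Hypothesis version : is_version face a.
Hypothesis k_gt1 : (1 < k)%N.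

Lemma game_matrix_row (p : F -> 'Z_k) v :
  \sum_r game_matrix face a v r * p r = a v (face (v, ord0)) * \sum_i p (face (v, i)).
Proof.
have inc0 : incident face v (face (v, ord0)) by apply/existsP; exists ord0.
rewrite /game_matrix (bigID (incident face v)) /=.
rewrite [X in _ + X]big1 ?addr0 => [|r /negbTE -> //].
  rewrite -corner_sum mulr_sumr; apply: eq_bigr => r inc_r.
  by rewrite inc_r (((version v).1 (reduced v)).1 r _ inc_r inc0).
by rewrite mul0r.
Qed.

Lemma null_corner_sum (p : F -> 'Z_k) v :
  \sum_r game_matrix face a v r * p r = 0 -> \sum_i p (face (v, i)) = 0.
Proof.
rewrite game_matrix_row; apply: ((version v).1 (reduced v)).2.
by apply/existsP; exists ord0.
Qed.

Lemma null_pattern_eq0 r1 r2 s :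
  path (adjacent face) r1 s -> last r1 s = r2 -> odd (size s) ->
  (forall m, odd m -> (m <= size s)%N -> coprime k m) ->
  forall q : F -> 'Z_k, q r1 = 0 -> q r2 = 0 ->
  (forall v, \sum_r game_matrix face a v r * q r = 0) -> forall r, q r = 0.
Proof.
move=> s_path <- odd_s cop q q1 q2 Mq.
have [d1 d1_r1] := face_surj r1; rewrite -d1_r1 in s_path q1 q2.
have corner0 v : \sum_i q (face (v, i)) = 0 by apply: null_corner_sum.
have [a' [b' [ab_s q_last]]] := walk_last_value corner0 q1 s_path.
have edge0 : edge_sum q d1 = 0.
  apply: (@Zp_natmul_eq_odd _ a' b'); rewrite ?ab_s //.
  by apply/eqP; rewrite -subr_eq0 -q_last q2.
have edges0 d : edge_sum q d = 0.
  by case: (edge_sum_sign corner0 d1 d) => ->; rewrite edge0 ?oppr0.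
exact: (pattern_eq0_of_edge_sum0 edges0 q1).
Qed.

Hypothesis cardF : #|F| = (#|V| + 2)%N.

Lemma unique_solving_of_odd_walk r1 r2 s :
  r1 != r2 -> path (adjacent face) r1 s -> last r1 s = r2 -> odd (size s) ->
  (forall m, odd m -> (m <= size s)%N -> coprime k m) ->
  unique_solving face a r1 r2.
Proof.
move=> r12 s_path s_last odd_s cop c.
have cardZ : #|[predC pred2 r1 r2]| = #|V|.
  by have := cardC (pred2 r1 r2); rewrite card2 r12 cardF addnC => /addIn.
have [|p [[p0 Mp] p_uniq]] :=
  square_system_uniq_solution (M := game_matrix face a) cardZ _ (fun v => - c v).
  move=> q q0 Mq; apply/ffunP => r; rewrite ffunE.
  by apply: (null_pattern_eq0 s_path s_last odd_s cop) => //;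
    apply: q0; rewrite !inE eqxx ?orbT.
exists p; split=> [|q [[q1 q2] Mq]].
  by split=> //; split; apply: p0; rewrite !inE eqxx ?orbT.
by apply: p_uniq; split=> // r /pred2P[] ->.
Qed.

End Diagram.

Theorem mainTheorem13 (k : nat) (V F : finType) (alpha : V * 'I_4 -> V * 'I_4)
    (face : V * 'I_4 -> F) (a : V -> F -> 'Z_k) (shade : F -> bool) (r1 r2 : F) :
  (2 <= k)%N ->
  is_knot_diagram alpha face ->
  reduced_diagram face ->
  is_version face a ->
  checkerboard face shade ->
  shade r1 -> ~~ shade r2 ->
  (forall t : nat, (1 <= t)%N -> k = (2 ^ t)%N -> unique_solving face a r1 r2) /\
  (~ (exists t : nat, k = (2 ^ t)%N) ->
     forall p : nat, prime p -> odd p -> (p %| k)%N ->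
       (forall q : nat, prime q -> odd q -> (q %| k)%N -> (p <= q)%N) ->
       (dual_dist face r1 r2 < p)%N ->
       unique_solving face a r1 r2).
Proof.
move=> k_gt1 [alphaK [_ [faceE [face_surj [one_comp cardF]]]]] reduced version checker.
move=> sh1 sh2.
have [s [s_path s_last s_size]] :=
  dual_distP (connect_adjacent alphaK faceE one_comp face_surj r1 r2).
have odd_s : odd (size s).
  have := walk_shade reduced checker s_path.
  by rewrite s_last sh1 addbT (negbTE sh2) => /esym/negbFE.
have r12 : r1 != r2 by apply: contraNneq sh2 => <-.
have solvable := unique_solving_of_odd_walk alphaK faceE one_comp face_surj reduced version
  k_gt1 cardF r12 s_path s_last odd_s.
split=> [t t_gt0 k_pow | _ p _ _ _ p_min dist_lt_p]; apply: solvable => m odd_m m_le.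
  by rewrite k_pow coprime_pexpl // coprime2n.
by apply: coprime_lt_least_odd_prime p_min odd_m _; rewrite (leq_ltn_trans m_le) ?s_size.
Qed.
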